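(* For every odd $n>1$, the algebra $\mathbf{A}_n$ does not have a minority term.
   Context: Let $[n]=\{1,\dots,n\}$ and let $m$ be the minority operation on $[n]$ given by $m(x,y,z)=x$ if $y=z$, $m(x,y,z)=y$ if $x=z$, and $m(x,y,z)=z$ otherwise. On $\{0,1,2,3\}$, $+,-$ denote arithmetic modulo 4 and $\oplus$ denotes bitwise XOR of 2-bit binary representations. Let $A_n=[n]\times\{0,1,2,3\}$. For $i\in[n]$ define the ternary operation $t_i$ on $A_n$ by $t_i((a_1,b_1),(a_2,b_2),(a_3,b_3))=(i,\,b_1-b_2+b_3)$ if $a_1=a_2=a_3=i$, and $=(m(a_1,a_2,a_3),\,b_1\oplus b_2\oplus b_3)$ otherwise. The algebra $\mathbf{A}_n$ has universe $A_n$ and basic operations $t_1,\dots,t_n$. A minority term of an algebra is a ternary term whose interpretation satisfies $m(y,x,x)\approx m(x,y,x)\approx m(x,x,y)\approx y$. *)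

From mathcomp Require Import all_boot.
Set Implicit Arguments. Unset Strict Implicit. Unset Printing Implicit Defensive.

(* [n] is represented by 'I_n (element k : 'I_n stands for k+1 in [n]);
   {0,1,2,3} is represented by 'I_4. *)

Definition minority {T : eqType} (x y z : T) : T :=
  if y == z then x else if x == z then y else z.

Definition zsub_add (b1 b2 b3 : 'I_4) : 'I_4 :=
  inord ((b1 + (4 - b2) + b3) %% 4).

Definition bxor3 (b1 b2 b3 : 'I_4) : 'I_4 :=
  inord (Nat.lxor (Nat.lxor b1 b2) b3).

Definition An (n : nat) : finType := ('I_n * 'I_4)%type.

Definition t_op (n : nat) (i : 'I_n) (u v w : An n) : An n :=
  if [&& u.1 == i, v.1 == i & w.1 == i] then (i, zsub_add u.2 v.2 w.2)
  else (minority u.1 v.1 w.1, bxor3 u.2 v.2 w.2).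

Inductive term (n : nat) : Type :=
  | Var : 'I_3 -> term n
  | Op : 'I_n -> term n -> term n -> term n -> term n.

Fixpoint eval (n : nat) (t : term n) (x y z : An n) : An n :=
  match t with
  | Var k => if val k == 0 then x else if val k == 1 then y else z
  | Op i t1 t2 t3 => t_op i (eval t1 x y z) (eval t2 x y z) (eval t3 x y z)
  end.

Definition is_minority_term (n : nat) (t : term n) : Prop :=
  forall x y : An n,
    [/\ eval t y x x = y, eval t x y x = y & eval t x x y = y].

From HB Require Import structures.
From mathcomp Require Import all_boot ssralg zmodp.
From Stdlib Require PeanoNat.
Set Implicit Arguments. Unset Strict Implicit. Unset Printing Implicit Defensive.
Import GRing.Theory.

(* On a block {a} x Z/4, which every term preserves, t_a acts on the second
   coordinate as x - y + z and every other t_i as x (+) y (+) z.  Let z(t) be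
   the value of t in (Z/4, x - y + z).  Both operations agree on the low bit,
   and their XOR-difference depends only on the low bits of the arguments; so
   by induction on t each block value has the low bit of z(t), and, n being
   odd, the XOR of the n block values is z(t).  For a minority term all block
   values coincide, hence z would satisfy the minority identities; but z is
   additive, so z(1,1,1) = z(1,0,0) + z(0,1,0) + z(0,0,1) = 3 <> 1. *)

Definition xorn (m p : nat) : nat := Nat.lxor m p.

Lemma xornA : associative xorn.
Proof. by move=> m p q; rewrite /xorn PeanoNat.Nat.lxor_assoc. Qed.

Lemma xornC : commutative xorn.
Proof. by move=> m p; rewrite /xorn PeanoNat.Nat.lxor_comm. Qed.

Lemma xor0n : left_id 0 xorn.
Proof. by move=> m; rewrite /xorn PeanoNat.Nat.lxor_0_l. Qed.

HB.instance Definition _ := Monoid.isComLaw.Build nat 0 xorn xornA xornC xor0n.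

Lemma xornn m : xorn m m = 0.
Proof. exact: PeanoNat.Nat.lxor_nilpotent. Qed.

Lemma xorn0 : right_id 0 xorn.
Proof. by move=> m; rewrite xornC xor0n. Qed.

Lemma xornK p : cancel (xorn^~ p) (xorn^~ p).
Proof. by move=> m; rewrite -xornA xornn xorn0. Qed.

Lemma oddE m : Nat.odd m = odd m.
Proof.
by elim: m => // m IHm; rewrite PeanoNat.Nat.odd_succ -PeanoNat.Nat.negb_odd IHm.
Qed.

Lemma odd_xorn m p : odd (xorn m p) = odd m (+) odd p.
Proof.
rewrite -!oddE -!PeanoNat.Nat.bit0_odd /xorn PeanoNat.Nat.lxor_spec.
by case: PeanoNat.Nat.testbit; case: PeanoNat.Nat.testbit.
Qed.

Lemma big_xorn_const n c : \big[xorn/0]_(i < n) c = if odd n then c else 0.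
Proof.
rewrite big_const_ord; elim: n => //= n ->.
by case: (odd n); rewrite /= ?xornn ?xorn0.
Qed.

Lemma xorn_lt4 m p : m < 4 -> p < 4 -> xorn m p < 4.
Proof. by case: m => [|[|[|[|]]]] //; case: p => [|[|[|[|]]]]. Qed.

Lemma val_bxor3 (a b c : 'I_4) : val (bxor3 a b c) = xorn (xorn a b) c.
Proof. by rewrite /bxor3 /= inordK // !xorn_lt4. Qed.

Lemma val_zsub_add (a b c : 'I_4) : val (zsub_add a b c) = (a + (4 - b) + c) %% 4.
Proof. by rewrite /zsub_add /= inordK ?ltn_mod. Qed.

Lemma zsub_addE (a b c : 'I_4) : zsub_add a b c = (a - b + c)%R.
Proof. by apply: val_inj; rewrite val_zsub_add /= modnDmr modnDml. Qed.

Lemma odd_zsub_add (a b c : 'I_4) : odd (zsub_add a b c) = odd a (+) odd b (+) odd c.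
Proof. by rewrite val_zsub_add odd_mod // !oddD oddB // ltnW. Qed.

Lemma odd_bxor3 (a b c : 'I_4) : odd (bxor3 a b c) = odd a (+) odd b (+) odd c.
Proof. by rewrite val_bxor3 !odd_xorn. Qed.

Lemma ord4_ind (P : 'I_4 -> Prop) :
  (P 0 -> P 1 -> P 2%:R -> P 3%:R -> forall x, P x)%R.
Proof.
move=> ? ? ? ? x; rewrite -(natr_Zp x).
by case: (nat_of_ord x) (ltn_ord x) => [|[|[|[|m]]]].
Qed.

Definition op_defect (a b c : 'I_4) : nat := xorn (zsub_add a b c) (bxor3 a b c).

Lemma zsub_add_defect (a b c : 'I_4) :
  val (zsub_add a b c) = xorn (bxor3 a b c) (op_defect a b c).
Proof. by rewrite /op_defect xornC xornK. Qed.

(* The high bit of x - y + z mod 4 is the XOR of the high bits plus a carry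
   computed from the low bits alone. *)
Lemma op_defect_low_bits (a b c a' b' c' : 'I_4) :
  odd a = odd a' -> odd b = odd b' -> odd c = odd c' ->
  op_defect a b c = op_defect a' b' c'.
Proof.
have defectE (x y z : 'I_4) :
    op_defect x y z = op_defect (odd x)%:R%R (odd y)%:R%R (odd z)%:R%R.
  rewrite /op_defect !val_zsub_add !val_bxor3.
  by move: x y z; do 3!apply: ord4_ind; vm_compute.
by move=> ea eb ec; rewrite defectE [RHS]defectE ea eb ec.
Qed.

Section Blocks.

Variable n : nat.
Implicit Types (t : term n) (a i : 'I_n) (x y z : 'I_4).

Fixpoint affine_eval t x y z : 'I_4 :=
  match t with
  | Var k => if val k == 0 then x else if val k == 1 then y else z
  | Op _ t1 t2 t3 =>
      zsub_add (affine_eval t1 x y z) (affine_eval t2 x y z) (affine_eval t3 x y z)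
  end.

Lemma affine_evalD t x y z x' y' z' :
  (affine_eval t (x + x') (y + y') (z + z') =
   affine_eval t x y z + affine_eval t x' y' z')%R.
Proof.
elim: t => [k|_ t1 IH1 t2 IH2 t3 IH3] /=; first by do !case: ifP.
rewrite !zsub_addE IH1 IH2 IH3 opprD.
by rewrite (addrACA (affine_eval t1 x y z)) (addrACA (_ - _)%R).
Qed.

Lemma affine_eval111 t :
  (affine_eval t 1 1 1 =
   affine_eval t 1 0 0 + affine_eval t 0 1 0 + affine_eval t 0 0 1)%R.
Proof.
have := (affine_evalD t 1 0 0 0 1 1)%R; have := (affine_evalD t 0 1 0 0 0 1)%R.
by rewrite !(addr0, add0r) => -> ->; rewrite addrA.
Qed.

Lemma eval_block_fst t a x y z : (eval t (a, x) (a, y) (a, z)).1 = a.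
Proof.
elim: t => [k|i t1 IH1 t2 IH2 t3 IH3] /=; first by do !case: ifP.
rewrite /t_op IH1 IH2 IH3 /minority eqxx.
by case: ifP => // /and3P[/eqP].
Qed.

Lemma eval_block_Op i t1 t2 t3 a x y z :
  let e t := (eval t (a, x) (a, y) (a, z)).2 in
  (eval (Op i t1 t2 t3) (a, x) (a, y) (a, z)).2 =
  if a == i then zsub_add (e t1) (e t2) (e t3) else bxor3 (e t1) (e t2) (e t3).
Proof. by rewrite /= /t_op !eval_block_fst; case: (a == i). Qed.

Hypothesis n_odd : odd n.

Lemma block_invariant t x y z :
  let e a := (eval t (a, x) (a, y) (a, z)).2 in
  (forall a, odd (e a) = odd (affine_eval t x y z)) /\
  \big[xorn/0]_(a < n) val (e a) = affine_eval t x y z.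
Proof.
elim: t => [k|i t1 [odd1 sum1] t2 [odd2 sum2] t3 [odd3 sum3]] e.
  have e_const a : e a = affine_eval (Var n k) x y z.
    by rewrite /e /=; do !case: ifP.
  by split=> [a|]; rewrite ?(eq_bigr _ (fun a _ => congr1 val (e_const a))) ?e_const
     ?big_xorn_const ?n_odd.
split=> [a|].
  by rewrite /e eval_block_Op /=; case: (a == i);
     rewrite ?odd_zsub_add ?odd_bxor3 odd1 odd2 odd3.
pose e_ t a := (eval t (a, x) (a, y) (a, z)).2.
have e_split a : val (e a) = xorn (bxor3 (e_ t1 a) (e_ t2 a) (e_ t3 a))
    (if a == i then op_defect (e_ t1 i) (e_ t2 i) (e_ t3 i) else 0).
  rewrite /e eval_block_Op; case: eqP => [-> | _]; first exact: zsub_add_defect.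
  by rewrite xorn0.
rewrite (eq_bigr _ (fun a _ => e_split a)) big_split /= -big_mkcond big_pred1_eq.
under eq_bigr => a _ do rewrite val_bxor3.
rewrite !big_split /= /e_ sum1 sum2 sum3.
by rewrite (op_defect_low_bits (odd1 i) (odd2 i) (odd3 i)) zsub_add_defect val_bxor3.
Qed.

Lemma affine_eval_block_const t x y z w :
  (forall a, eval t (a, x) (a, y) (a, z) = (a, w)) -> affine_eval t x y z = w.
Proof.
move=> block_w; apply: ord_inj; have [_ <-] := block_invariant t x y z.
by rewrite (eq_bigr (fun _ => val w)) ?big_xorn_const ?n_odd // => a _; rewrite block_w.
Qed.

End Blocks.

Theorem proposition5p4 (n : nat) (hodd : odd n) (hn : 1 < n) :
  ~ (exists t : term n, is_minority_term t).
Proof.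
move=> [t minority_t].
have block_const := affine_eval_block_const hodd (t := t).
have e100 : (affine_eval t 1 0 0 = 1)%R.
  by apply: block_const => a; have [-> _ _] := minority_t (a, 0%R) (a, 1%R).
have e010 : (affine_eval t 0 1 0 = 1)%R.
  by apply: block_const => a; have [_ -> _] := minority_t (a, 0%R) (a, 1%R).
have e001 : (affine_eval t 0 0 1 = 1)%R.
  by apply: block_const => a; have [_ _ ->] := minority_t (a, 0%R) (a, 1%R).
have e111 : (affine_eval t 1 1 1 = 1)%R.
  by apply: block_const => a; have [-> _ _] := minority_t (a, 1%R) (a, 1%R).
by move: (affine_eval111 t); rewrite e100 e010 e001 e111 => /eqP.
Qed.
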